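(* Let $R$ be a $*$-reducing ring and let $p,q\in R$ be projections. Then the following are equivalent: (1) $(1-p)(1-q)$ is MP invertible; (2) $1-p-q$ is MP invertible; (3) $pq$ is MP invertible.
   Context: $R$ is an associative ring with identity $1$ and an involution $a\mapsto a^*$ (satisfying $(a^* )^*=a$, $(a+b)^*=a^*+b^*$, $(ab)^*=b^*a^*$). $R$ is $*$-reducing if $a^*a=0$ implies $a=0$ for all $a\in R$. An element $a$ is MP invertible if there is $b$ with $aba=a$, $bab=b$, $(ab)^*=ab$, $(ba)^*=ba$. A projection is an element $p$ with $p^2=p=p^*$. *)

From HB Require Import structures.
From mathcomp Require Import all_boot all_algebra.
Set Implicit Arguments. Unset Strict Implicit. Unset Printing Implicit Defensive.
Import GRing.Theory.
Local Open Scope ring_scope.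

Definition is_involution (R : pzRingType) (star : R -> R) : Prop :=
  [/\ forall a, star (star a) = a,
      forall a b, star (a + b) = star a + star b &
      forall a b, star (a * b) = star b * star a].

Definition star_reducing (R : pzRingType) (star : R -> R) : Prop :=
  forall a : R, star a * a = 0 -> a = 0.

Definition MP_invertible (R : pzRingType) (star : R -> R) (a : R) : Prop :=
  exists b : R, [/\ a * b * a = a, b * a * b = b,
                    star (a * b) = a * b & star (b * a) = b * a].

Definition projection (R : pzRingType) (star : R -> R) (p : R) : Prop :=
  p * p = p /\ star p = p.

(* Put a := 1 - p - q, which is self-adjoint. Multiplying by a on the side of a
   projection swaps it and changes sign: p a = a q = - p q and q a = a p = - q p.
   Hence p a a = p q (p q)^* and a a q = (p q)^* p q. Since s is MP invertible
   iff s lies in s s^* R and in R s^* s (for self-adjoint a it suffices that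
   a lies in a a R), a factorisation of a through a a yields one of p q through
   p q (p q)^* and (p q)^* p q; conversely, if t is the MP inverse of p q then
   a = a a b for b = a + p t + t q - t - t^*. Replacing p, q by the projections
   1 - p, 1 - q turns a into -a and p q into (1 - p) (1 - q). *)
From mathcomp Require Import all_boot all_algebra.
Set Implicit Arguments. Unset Strict Implicit. Unset Printing Implicit Defensive.
Import GRing.Theory.
Local Open Scope ring_scope.

Section Involution.
Variables (R : pzRingType) (star : R -> R).

Lemma MP_invertibleN a : MP_invertible star a -> MP_invertible star (- a).
Proof.
case=> b [h1 h2 h3 h4]; exists (- b).
by rewrite !mulrNN ?mulrN ?mulNr ?opprK h1 h2 h3 h4.
Qed.

Lemma MP_invertibleNE a : MP_invertible star (- a) <-> MP_invertible star a.
Proof. by split=> /MP_invertibleN //; rewrite opprK. Qed.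

Hypothesis Hinv : is_involution star.

Lemma starK a : star (star a) = a. Proof. by case: Hinv. Qed.
Lemma starD a b : star (a + b) = star a + star b. Proof. by case: Hinv. Qed.
Lemma starM a b : star (a * b) = star b * star a. Proof. by case: Hinv. Qed.

Lemma star0 : star 0 = 0.
Proof. by apply: (@addrI _ (star 0)); rewrite -starD !addr0. Qed.

Lemma starN a : star (- a) = - star a.
Proof. by apply: (@addIr _ (star a)); rewrite -starD !addNr star0. Qed.

Lemma starB a b : star (a - b) = star a - star b.
Proof. by rewrite starD starN. Qed.

Lemma star1 : star 1 = 1.
Proof. by have := starM (star 1) 1; rewrite mulr1 !starK mulr1. Qed.

Lemma projectionC p : projection star p -> projection star (1 - p).
Proof.
case=> pp sp; split; last by rewrite starB star1 sp.
by rewrite mulrBl mul1r mulrBr mulr1 pp subrr subr0.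
Qed.

(* From s^* = x^* s s^* we get that x^* s = s^* x is self-adjoint, and likewise
   s y^*; the Moore-Penrose inverse is then x^* s y^*. *)
Lemma MP_invertibleP s : MP_invertible star s <->
  (exists x, s = s * star s * x) /\ (exists y, s = y * star s * s).
Proof.
split=> [[b [h1 _ h3 h4]] | [[x hx] [y hy]]].
  split; exists (star b); first by rewrite -{1}h1 -mulrA -h4 starM mulrA.
  by rewrite -{1}h1 -h3 starM.
have e1 : star x * s * star s = star s by rewrite [in RHS]hx !starM starK mulrA.
have e2 : star s * (s * star y) = star s by rewrite [in RHS]hy !starM starK.
have i1 : star x * s = star s * x by rewrite {1}hx !mulrA e1.
have i2 : s * star y = y * star s by rewrite {1}hy -!mulrA e2.
have j1 : s * star x * s = s by rewrite -mulrA i1 mulrA -hx.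
have j2 : s * star y * s = s by rewrite i2 -hy.
have j1' c : c * s * star x * s = c * s by rewrite -!mulrA [s * _]mulrA j1.
have j2' c : c * s * star y * s = c * s by rewrite -!mulrA [s * _]mulrA j2.
exists (star x * s * star y); split.
- by rewrite ?mulrA j1 j2.
- by rewrite ?mulrA j2' j1'.
- by rewrite ?mulrA j1 starM starK i2.
- by rewrite ?mulrA j2' starM starK i1.
Qed.

Lemma MP_invertible_selfadjoint a x :
  star a = a -> a = a * a * x -> MP_invertible star a.
Proof.
move=> sa ax; apply/MP_invertibleP; rewrite sa; split; first by exists x.
by exists (star x); rewrite -{1}sa {1}ax !starM sa mulrA.
Qed.

Section TwoProjections.
Variables p q : R.
Hypotheses (pp : p * p = p) (sp : star p = p) (qq : q * q = q) (sq : star q = q).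

Local Notation a := (1 - p - q).

Lemma star_subpq : star a = a.
Proof. by rewrite !starB star1 sp sq. Qed.

Lemma mulp_subpq : p * a = - (p * q).
Proof. by rewrite !mulrBr mulr1 pp subrr sub0r. Qed.

Lemma mul_subpq_q : a * q = - (p * q).
Proof. by rewrite !mulrBl mul1r qq addrAC subrr sub0r. Qed.

Lemma mulq_subpq : q * a = - (q * p).
Proof. by rewrite !mulrBr mulr1 qq addrAC subrr sub0r. Qed.

Lemma mul_subpq_p : a * p = - (q * p).
Proof. by rewrite !mulrBl mul1r pp subrr sub0r. Qed.

Lemma mul_subpq_subpq : a * a = a + p * q + q * p.
Proof. by rewrite {1}mulrBl mulrBl mul1r mulp_subpq mulq_subpq !opprK. Qed.

Lemma MP_invertible_mul_of_subpq : MP_invertible star a -> MP_invertible star (p * q).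
Proof.
case/MP_invertibleP; rewrite star_subpq => -[x ax] [y ya].
have pq_pqs : p * q * star (p * q) = p * a * a.
  by rewrite starM sp sq mulp_subpq mulNr -(mulrA p q a) mulq_subpq mulrN opprK
    !mulrA -(mulrA p q q) qq.
have pqs_pq : star (p * q) * (p * q) = a * a * q.
  by rewrite starM sp sq -(mulrA a a q) mul_subpq_q mulrN (mulrA a p q) mul_subpq_p
    mulNr opprK !mulrA -(mulrA q p p) pp.
apply/MP_invertibleP; split.
- exists (- x); have pax : p * a = p * a * a * x by rewrite {1}ax !mulrA.
  by rewrite pq_pqs mulrN -pax mulp_subpq opprK.
- exists (- y); have yaq : a * q = y * a * a * q by rewrite {1}ya.
  by rewrite -mulrA pqs_pq mulNr !mulrA -yaq mul_subpq_q opprK.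
Qed.

Section MPInverseOfPQ.
Variable t : R.
Hypotheses (h1 : p * q * t * (p * q) = p * q) (h2 : t * (p * q) * t = t)
  (h3 : star (p * q * t) = p * q * t) (h4 : star (t * (p * q)) = t * (p * q)).

Lemma MPinv_p : t * p = t.
Proof.
have E : t = t * star t * (q * p).
  by rewrite -{1}h2 -(mulrA t (p * q) t) -h3 !starM sp sq mulrA.
by rewrite {1}E -(mulrA _ (q * p) p) -(mulrA q p p) pp -E.
Qed.

Lemma q_MPinv : q * t = t.
Proof.
have E : t = q * p * star t * t by rewrite -{1}h2 -h4 !starM sp sq.
by rewrite {1}E !mulrA qq -E.
Qed.

Lemma p_MPinv_q : p * t * q = p * q.
Proof. by rewrite -[RHS]h1 -(mulrA p q t) q_MPinv mulrA -(mulrA p t p) MPinv_p. Qed.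

Lemma q_p_MPinv : q * p * t = q * p.
Proof.
have pts : star (p * t) = p * t by have := h3; rewrite -!(mulrA p q t) q_MPinv.
have := congr1 star p_MPinv_q.
by rewrite (starM (p * t) q) pts sq (starM p q) sp sq mulrA.
Qed.

Lemma q_MPinv_star : q * star t = t * q.
Proof.
have tpq : t * (p * q) = t * q by rewrite mulrA MPinv_p.
by have := h4; rewrite tpq starM sq.
Qed.

Lemma p_MPinv_star : p * star t = star t.
Proof. by have := congr1 star MPinv_p; rewrite starM sp. Qed.

Lemma MP_invertible_subpq_of_MPinv : MP_invertible star a.
Proof.
pose b := a + p * t + t * q - t - star t.
have at1 : a * t = - (p * t) by rewrite !mulrBl mul1r q_MPinv addrAC subrr sub0r.
have at2 : a * star t = - (q * star t).
  by rewrite !mulrBl mul1r p_MPinv_star subrr sub0r.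
have at3 : a * (p * t) = - (q * p) by rewrite mulrA mul_subpq_p mulNr q_p_MPinv.
have at4 : a * (t * q) = - (p * q).
  by rewrite !mulrBl mul1r !mulrA p_MPinv_q q_MPinv addrAC subrr sub0r.
have at5 : a * (q * star t) = - (p * q).
  by rewrite mulrA mul_subpq_q mulNr -mulrA q_MPinv_star mulrA p_MPinv_q.
have ab : a * b = a + p * t + q * star t.
  rewrite /b mulrBr mulrBr mulrDr mulrDr mul_subpq_subpq at1 at2 at3 at4 !opprK.
  by rewrite addrK addrK.
apply: (@MP_invertible_selfadjoint _ b star_subpq).
by rewrite -mulrA ab mulrDr mulrDr mul_subpq_subpq at3 at5 addrK addrK.
Qed.

End MPInverseOfPQ.

Lemma MP_invertible_subpqE : MP_invertible star a <-> MP_invertible star (p * q).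
Proof.
split; first exact: MP_invertible_mul_of_subpq.
by case=> t [h1 h2 h3 h4]; exact: (MP_invertible_subpq_of_MPinv h1 h2 h3 h4).
Qed.

End TwoProjections.
End Involution.

Theorem lemma2p10 (R : pzRingType) (star : R -> R)
  (Hinv : is_involution star) (Hred : star_reducing star)
  (p q : R) (Hp : projection star p) (Hq : projection star q) :
  [<-> MP_invertible star ((1 - p) * (1 - q));
       MP_invertible star (1 - p - q);
       MP_invertible star (p * q)].
Proof.
have [[pp sp] [qq sq]] := (Hp, Hq).
have [[pp' sp'] [qq' sq']] := (projectionC Hinv Hp, projectionC Hinv Hq).
have compl : 1 - (1 - p) - (1 - q) = - (1 - p - q).
  by rewrite !opprB (addrC 1 (p - 1)) subrK addrCA.
have E12 : MP_invertible star ((1 - p) * (1 - q)) <-> MP_invertible star (1 - p - q).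
  split=> [/(MP_invertible_subpqE Hinv pp' sp' qq' sq') | /MP_invertibleN].
  - by rewrite compl => /MP_invertibleNE.
  - by rewrite -compl => /(MP_invertible_subpqE Hinv pp' sp' qq' sq').
have E23 := MP_invertible_subpqE Hinv pp sp qq sq.
by tfae=> [/E12 | /E23 | /E23/E12].
Qed.
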